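(* Every affine liner is $2$-balanced, i.e., all its lines have the same cardinality.
   Context: A liner is a set $X$ of points with a family of subsets called lines such that any two distinct points lie in a unique line and every line contains at least two points. For distinct $x,y$, $\overline{xy}$ is the line through them and $\overline{xx}:=\{x\}$. A liner $X$ is affine if for all $o,x,y\in X$ and $p\in\overline{xy}\setminus\overline{ox}$ there exists $u\in\overline{oy}$ such that for every $v\in\overline{oy}$: $u=v$ if and only if $\overline{vp}\cap\overline{ox}=\varnothing$. *)

(** Set equality is extensional. *)
Definition is_liner {X : Type} (L : (X -> Prop) -> Prop) : Prop :=
  (forall x y : X, x <> y ->
     exists l, L l /\ l x /\ l y /\
       forall l', L l' -> l' x -> l' y -> forall z, l' z <-> l z) /\
  (forall l, L l -> exists x y : X, x <> y /\ l x /\ l y).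

(** [line L x y] is the line through [x] and [y] when [x <> y],
    and the singleton [{x}] when [x = y]. *)
Definition line {X : Type} (L : (X -> Prop) -> Prop) (x y : X) : X -> Prop :=
  fun z => (x = y /\ z = x) \/ (x <> y /\ exists l, L l /\ l x /\ l y /\ l z).

Definition is_affine {X : Type} (L : (X -> Prop) -> Prop) : Prop :=
  forall o x y p : X, line L x y p -> ~ line L o x p ->
    exists u, line L o y u /\
      forall v, line L o y v ->
        (u = v <-> ~ exists z, line L v p z /\ line L o x z).

Definition equipotent {X : Type} (A B : X -> Prop) : Prop :=
  exists (f : {x | A x} -> {x | B x}) (g : {x | B x} -> {x | A x}),
    (forall a, g (f a) = a) /\ (forall b, f (g b) = b).

(* Two lines [l1], [l2] through a common point [o] are put in bijection by
   parallel projection: choose [a] on [l1] off [l2] and [b <> o] on [l2]; send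
   [a] to [b] and every other [z] of [l1] to the unique [w] of [l2] such that
   the line [zw] misses the line [ab].  The affine axiom, applied to the
   triangle [b a o] and the point [z], says precisely that this [w] exists and
   is unique, and symmetrically for the inverse map.  Two arbitrary lines are
   then compared through a third line joining a point of each. *)

From Stdlib Require Import Classical ClassicalEpsilon ProofIrrelevance.

Lemma sig_proj1_inj {X : Type} (P : X -> Prop) (a b : {x | P x}) :
  proj1_sig a = proj1_sig b -> a = b.
Proof.
  destruct a as [x px], b as [y py]; simpl; intros <-.
  f_equal; apply proof_irrelevance.
Qed.

Lemma equipotent_of_bijective_rel {X : Type} (A B : X -> Prop)
    (R : X -> X -> Prop) :
  (forall z, A z -> exists w, B w /\ R z w /\ forall w', B w' -> R z w' -> w' = w) ->
  (forall w, B w -> exists z, A z /\ R z w /\ forall z', A z' -> R z' w -> z' = z) ->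
  equipotent A B.
Proof.
  intros HAB HBA.
  assert (f : forall x : {z | A z}, {y : {w | B w} | R (proj1_sig x) (proj1_sig y)}).
  { intros [z Az].
    destruct (constructive_indefinite_description _ (HAB z Az)) as [w [Bw [Rzw _]]].
    now exists (exist _ w Bw). }
  assert (g : forall y : {w | B w}, {x : {z | A z} | R (proj1_sig x) (proj1_sig y)}).
  { intros [w Bw].
    destruct (constructive_indefinite_description _ (HBA w Bw)) as [z [Az [Rzw _]]].
    now exists (exist _ z Az). }
  exists (fun x => proj1_sig (f x)), (fun y => proj1_sig (g y)); split.
  - intros x; apply sig_proj1_inj.
    destruct (f x) as [y Rxy]; simpl; destruct (g y) as [x' Rx'y]; simpl.
    destruct (HBA _ (proj2_sig y)) as [z [_ [_ uniq]]].
    now rewrite (uniq _ (proj2_sig x') Rx'y), (uniq _ (proj2_sig x) Rxy).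
  - intros y; apply sig_proj1_inj.
    destruct (g y) as [x Rxy]; simpl; destruct (f x) as [y' Rxy']; simpl.
    destruct (HAB _ (proj2_sig x)) as [w [_ [_ uniq]]].
    now rewrite (uniq _ (proj2_sig y') Rxy'), (uniq _ (proj2_sig y) Rxy).
Qed.

Lemma equipotent_of_same_members {X : Type} (A B : X -> Prop) :
  (forall z, A z <-> B z) -> equipotent A B.
Proof.
  intros AB; apply equipotent_of_bijective_rel with (R := @eq X).
  - intros z Az; exists z; repeat split; [apply AB; exact Az | auto].
  - intros z Bz; exists z; repeat split; [apply AB; exact Bz | auto].
Qed.

Lemma equipotent_sym {X : Type} (A B : X -> Prop) :
  equipotent A B -> equipotent B A.
Proof. intros [f [g [gf fg]]]; now exists g, f. Qed.

Lemma equipotent_trans {X : Type} (A B C : X -> Prop) :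
  equipotent A B -> equipotent B C -> equipotent A C.
Proof.
  intros [f1 [g1 [gf1 fg1]]] [f2 [g2 [gf2 fg2]]].
  exists (fun a => f2 (f1 a)), (fun c => g1 (g2 c)); split; intros.
  - now rewrite gf2, gf1.
  - now rewrite fg1, fg2.
Qed.

Section AffineLiner.

Variable X : Type.
Variable L : (X -> Prop) -> Prop.
Hypothesis liner_L : is_liner L.
Hypothesis affine_L : is_affine L.

Lemma lines_ext l l' x y : L l -> L l' -> x <> y -> l x -> l y -> l' x -> l' y ->
  forall z, l z <-> l' z.
Proof.
  intros Ll Ll' xy lx ly l'x l'y z.
  destruct (proj1 liner_L x y xy) as [m [_ [_ [_ uniq]]]].
  rewrite (uniq l Ll lx ly z), (uniq l' Ll' l'x l'y z); tauto.
Qed.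

Lemma line_spec l x y z : x <> y -> L l -> l x -> l y -> line L x y z <-> l z.
Proof.
  intros xy Ll lx ly; split.
  - intros [[? _] | [_ [m [Lm [mx [my mz]]]]]]; [contradiction |].
    now apply (lines_ext m l x y).
  - intros lz; right; split; [exact xy | now exists l].
Qed.

Lemma line_sym x y z : line L x y z -> line L y x z.
Proof.
  intros [[xy zx] | [xy [l [Ll [lx [ly lz]]]]]].
  - left; split; congruence.
  - right; split; [congruence | now exists l].
Qed.

Lemma line_memr x y : line L x y y.
Proof.
  destruct (classic (x = y)) as [xy | xy]; [now left |].
  right; split; [exact xy |].
  destruct (proj1 liner_L x y xy) as [l [Ll [lx [ly _]]]]; now exists l.
Qed.

Definition lines_disjoint z w a b := ~ exists t, line L z w t /\ line L a b t.

Lemma lines_disjoint_sym z w a b :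
  lines_disjoint z w a b -> lines_disjoint w z b a.
Proof.
  intros D [t [zwt abt]]; apply D; exists t; split; now apply line_sym.
Qed.

Lemma lines_disjoint_irrefl z a b : ~ lines_disjoint z b a b.
Proof. intros D; apply D; exists b; split; apply line_memr. Qed.

Lemma exists_unique_parallel_projection l1 l2 o a b :
  L l1 -> L l2 -> l1 o -> l2 o -> l1 a -> l2 b -> a <> o -> b <> o -> ~ l1 b ->
  forall z, l1 z -> z <> a ->
  exists w, l2 w /\ lines_disjoint z w a b /\
    forall w', l2 w' -> lines_disjoint z w' a b -> w' = w.
Proof.
  intros L1 L2 l1o l2o l1a l2b ao bo l1b z l1z za.
  assert (ba : b <> a) by (intros ->; contradiction).
  assert (aoz : line L a o z) by now apply (line_spec l1).
  assert (baz : ~ line L b a z).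
  { intros [[? _] | [_ [m [Lm [mb [ma mz]]]]]]; [contradiction |].
    apply l1b; now apply (lines_ext m l1 a z). }
  destruct (affine_L b a o z aoz baz) as [u [bou parallel_u]].
  assert (l2_spec : forall v, line L b o v <-> l2 v) by (intros; now apply line_spec).
  exists u; repeat split.
  - now apply l2_spec.
  - intros [t [zut abt]]; apply (proj1 (parallel_u u bou) eq_refl).
    exists t; split; now apply line_sym.
  - intros w l2w D; symmetry; apply (parallel_u w); [now apply l2_spec |].
    intros [t [wzt bat]]; apply D; exists t; split; now apply line_sym.
Qed.

Lemma equipotent_lines_through_off l1 l2 o a :
  L l1 -> L l2 -> l1 o -> l2 o -> l1 a -> ~ l2 a -> equipotent l1 l2.
Proof.
  intros L1 L2 l1o l2o l1a l2a.
  assert (ao : a <> o) by (intros ->; contradiction).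
  destruct (proj2 liner_L l2 L2) as [x [y [xy [l2x l2y]]]].
  assert (exists b, l2 b /\ b <> o) as [b [l2b bo]].
  { destruct (classic (x = o)); [exists y | exists x]; split; congruence. }
  assert (l1b : ~ l1 b) by (intros l1b; apply l2a; now apply (lines_ext l1 l2 o b)).
  apply equipotent_of_bijective_rel
    with (R := fun z w => (z = a /\ w = b) \/ (z <> a /\ lines_disjoint z w a b)).
  - intros z l1z; destruct (classic (z = a)) as [-> | za].
    + exists b; repeat split; auto.
      intros w' _ [[_ ->] | [? _]]; [reflexivity | contradiction].
    + destruct (exists_unique_parallel_projection l1 l2 o a b)
        with (z := z) as [w [l2w [D uniq]]]; auto.
      exists w; repeat split; auto.
      intros w' l2w' [[? _] | [_ D']]; [contradiction | now apply uniq].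
  - intros w l2w; destruct (classic (w = b)) as [-> | wb].
    + exists a; repeat split; auto.
      intros z' _ [[-> _] | [_ D]]; [reflexivity |].
      exfalso; now apply (lines_disjoint_irrefl z' a b).
    + destruct (exists_unique_parallel_projection l2 l1 o b a)
        with (z := w) as [z [l1z [D uniq]]]; auto.
      exists z; repeat split; auto.
      * right; split; [| now apply lines_disjoint_sym].
        intros ->; apply (lines_disjoint_irrefl w b a), D.
      * intros z' l1z' [[_ ?] | [_ D']]; [contradiction |].
        now apply uniq, lines_disjoint_sym.
Qed.

Lemma equipotent_concurrent_lines l1 l2 o :
  L l1 -> L l2 -> l1 o -> l2 o -> equipotent l1 l2.
Proof.
  intros L1 L2 l1o l2o.
  destruct (classic (forall z, l1 z <-> l2 z)) as [same | differ].
  { now apply equipotent_of_same_members. }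
  apply not_all_ex_not in differ as [z differ].
  destruct (classic (l1 z)) as [l1z | l1z].
  - apply (equipotent_lines_through_off l1 l2 o z); auto.
    intros l2z; apply differ; tauto.
  - apply equipotent_sym, (equipotent_lines_through_off l2 l1 o z); auto.
    apply NNPP; intros l2z; apply differ; tauto.
Qed.

End AffineLiner.

Theorem theorem3p3p17 (X : Type) (L : (X -> Prop) -> Prop) :
  is_liner L -> is_affine L ->
  forall l1 l2, L l1 -> L l2 -> equipotent l1 l2.
Proof.
  intros liner_L affine_L l1 l2 L1 L2.
  destruct (proj2 liner_L l1 L1) as [a [_ [_ [l1a _]]]].
  destruct (proj2 liner_L l2 L2) as [b [_ [_ [l2b _]]]].
  destruct (classic (a = b)) as [<- | ab].
  { now apply (equipotent_concurrent_lines X L liner_L affine_L l1 l2 a). }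
  destruct (proj1 liner_L a b ab) as [m [Lm [ma [mb _]]]].
  apply equipotent_trans with m.
  - now apply (equipotent_concurrent_lines X L liner_L affine_L l1 m a).
  - now apply (equipotent_concurrent_lines X L liner_L affine_L m l2 b).
Qed.
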